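(* For every integer $n\ge 2$, every independent set of the hypergraph $\mathtt{H}^{n}_{1}(\{0,1,2\})$ has size at most $\frac{2}{3}\cdot 3^n$.
   Context: $\mathtt{H}^{n}_{1}(\{0,1,2\})$ is the $3$-uniform hypergraph with vertex set $\{0,1,2\}^n$ in which three distinct vertices $\mathbf{x}^1,\mathbf{x}^2,\mathbf{x}^3$ form a hyperedge iff $\sum_{i=1}^n \big|\{0,1,2\}\setminus\{\mathbf{x}^1_i,\mathbf{x}^2_i,\mathbf{x}^3_i\}\big| \le 1$. An independent set is a set of vertices containing no hyperedge. *)

From mathcomp Require Import all_boot.
Set Implicit Arguments. Unset Strict Implicit. Unset Printing Implicit Defensive.

Definition vtx (n : nat) := {ffun 'I_n -> 'I_3}.

Definition missing n (x y z : vtx n) (i : 'I_n) : nat :=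
  #|[set: 'I_3] :\: [set x i; y i; z i]|.

Definition hedge n (x y z : vtx n) : bool :=
  [&& x != y, y != z, x != z & \sum_(i < n) missing x y z i <= 1].

Definition independent n (A : {set vtx n}) : bool :=
  [forall x in A, forall y in A, forall z in A, ~~ hedge x y z].

From mathcomp Require Import all_boot all_algebra.
Import GRing.Theory.

Set Implicit Arguments.
Unset Strict Implicit.
Unset Printing Implicit Defensive.

(* Translating every coordinate by 1 in Z/3Z is a fixed-point-free
   permutation of {0,1,2}^n whose orbits {x, x + 1, x + 2} are hyperedges:
   in each coordinate the three words show all three symbols, so nothing is
   missing. An independent set therefore contains at most two points of each
   orbit, and averaging over the orbits gives |A| <= 2/3 * 3^n. The bound in
   fact holds as soon as n >= 1. *)

Lemma card_sum_mem (T : finType) (A : {set T}) : #|A| = \sum_(x : T) (x \in A).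
Proof. by rewrite -sum1_card big_mkcond; apply: eq_bigr => x _; case: (x \in A). Qed.

Lemma card_no_orbit_triple (T : finType) (f : T -> T) (A : {set T}) :
    injective f -> (forall x, x \in A -> f x \in A -> f (f x) \notin A) ->
  3 * #|A| <= 2 * #|T|.
Proof.
move=> f_inj no_triple.
have preimA := card_preimset A f_inj.
have preim2A := card_preimset (f @^-1: A) f_inj.
have -> : 3 * #|A| = #|A| + #|f @^-1: A| + #|f @^-1: (f @^-1: A)|.
  by rewrite preim2A preimA mulSn mul2n -addnn addnA.
rewrite !card_sum_mem -!big_split /= mulnC -sum_nat_const leq_sum // => x _.
rewrite !inE; have [xA|_] := boolP (x \in A); last by do 2!case: (_ \in A).
have [fxA|_] := boolP (f x \in A); last by case: (_ \in A).
by rewrite (negbTE (no_triple x xA fxA)).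
Qed.

Lemma Z3_orbit_cover (a : 'I_3) : [set a; (a + 1)%R; (a + 1 + 1)%R] = setT.
Proof. by apply/setP => j; rewrite !inE; case: a => -[|[|[|]]] //; case: j => -[|[|[|]]]. Qed.

Lemma Z3_addr1_neq (a : 'I_3) : a != (a + 1)%R.
Proof. by case: a => -[|[|[|]]]. Qed.

Lemma Z3_addr2_neq (a : 'I_3) : a != (a + 1 + 1)%R.
Proof. by case: a => -[|[|[|]]]. Qed.

Definition shift {n} (x : vtx n) : vtx n := (x + [ffun=> 1])%R.

Lemma shift_inj n : injective (@shift n).
Proof. exact: addIr. Qed.

Lemma shiftE n (x : vtx n) (i : 'I_n) : shift x i = (x i + 1)%R.
Proof. by rewrite /shift !ffunE. Qed.

Lemma hedge_shift_orbit n (x : vtx n) :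
  0 < n -> hedge x (shift x) (shift (shift x)).
Proof.
move=> n_gt0; set i0 := Ordinal n_gt0.
have shift_neq (y : vtx n) : y != shift y.
  by apply: contra (Z3_addr1_neq (y i0)) => /eqP {1}->; rewrite shiftE.
rewrite /hedge !shift_neq /=; apply/andP; split.
  by apply: contra (Z3_addr2_neq (x i0)) => /eqP {1}->; rewrite !shiftE.
rewrite big1 // => i _.
by rewrite /missing !shiftE Z3_orbit_cover setDv cards0.
Qed.

Theorem fact3p3 (n : nat) (hn : 2 <= n) (A : {set vtx n}) :
  independent A -> 3 * #|A| <= 2 * 3 ^ n.
Proof.
move=> /forallP indepA.
have card_vtx : #|{: vtx n}| = 3 ^ n by rewrite card_ffun !card_ord.
rewrite -card_vtx; apply: (card_no_orbit_triple (@shift_inj n)) => x xA sxA.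
apply: contraL (hedge_shift_orbit x (ltnW hn)) => ssxA.
by move: (indepA x); rewrite xA => /forall_inP/(_ _ sxA)/forall_inP/(_ _ ssxA).
Qed.
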